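(* Let $Q=(I,\Omega)$ be a quiver, $\theta\in\mathbb{Z}^I$, $\alpha\in\mathbb{N}^I$, and $d^*=(d^1,\dots,d^s)$ a tuple of nonzero vectors in $\mathbb{N}^I$ with $d^1+\cdots+d^s=\alpha$. Let $F^*$ be a flag of type $d^*$ in $\bigoplus_{i\in I}\mathbb{C}^{\alpha_i}$, and let $\varphi:\mathrm{Rep}(Q,\alpha)_{F^*}\to\prod_{k=1}^s\mathrm{Rep}(Q,d^k)$ and $\mathrm{Rep}(Q,\alpha)^{ss}_{F^*}=\varphi^{-1}\bigl(\prod_{k=1}^s\mathrm{Rep}(Q,d^k)^{ss}\bigr)$ be as in the context. If $\mathrm{Rep}(Q,\alpha)^{ss}_{F^*}$ is nonempty, then $\dim \mathrm{Rep}(Q,\alpha)^{ss}_{F^*}=\dim\mathrm{Rep}(Q,\alpha)_{F^*}$.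
   Context: $\mathrm{Rep}(Q,\beta)$ is the vector space of complex representations of $Q$ with dimension vector $\beta$. A flag of type $d^*$ is a chain $0=F^0\subset F^1\subset\cdots\subset F^s=\bigoplus_i\mathbb{C}^{\alpha_i}$ of $I$-graded subspaces with $\dim_{I} F^k/F^{k-1}=d^k$. $\mathrm{Rep}(Q,\alpha)_{F^*}$ is the subspace of representations $x$ with $x_h(F^k_i)\subseteq F^k_j$ for every arrow $h:i\to j$ and every $k$. The map $\varphi$ sends $x$ to the tuple of representations induced on the subquotients $F^k/F^{k-1}$ (each identified with $\bigoplus_i\mathbb{C}^{d^k_i}$ by fixed choices of bases). The slope of a nonzero representation $V$ with dimension vector $\beta$ is $\mu(V)=\bigl(\sum_i\theta_i\beta_i\bigr)/\bigl(\sum_i\beta_i\bigr)$; $V$ is semistable if $\mu(U)\leq\mu(V)$ for every nonzero subrepresentation $U$ of $V$, and $\mathrm{Rep}(Q,\beta)^{ss}$ is the set of semistable representations. *)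

From HB Require Import structures.
From mathcomp Require Import all_boot all_order all_algebra.
From mathcomp Require Import complex Rstruct.
From mathcomp Require Import mpoly.
From Stdlib Require Reals.

Set Implicit Arguments.
Unset Strict Implicit.
Unset Printing Implicit Defensive.

Import Order.TTheory GRing.Theory Num.Theory.
Local Open Scope ring_scope.

Definition CC : fieldType := complex Rdefinitions.R.

Section Quiver.
Variables (I Omega : finType) (src tgt : Omega -> I).

(* Rep(Q, beta): for each arrow h : i -> j a linear map C^{beta_i} -> C^{beta_j},
   written as a matrix acting on row vectors (v |-> v *m x h). *)
Definition rep (beta : I -> nat) : Type :=
  forall h : Omega, 'M[CC]_(beta (src h), beta (tgt h)).

Definition slope (theta : I -> int) (beta : I -> nat) : rat :=
  ((\sum_(i : I) theta i * (beta i)%:Z)%:~R) / ((\sum_(i : I) beta i)%N)%:R.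

(* U = (U_i)_i (row spaces of the matrices U i) is a subrepresentation of x *)
Definition is_subrep (beta : I -> nat) (x : rep beta)
  (U : forall i : I, 'M[CC]_(beta i)) : Prop :=
  forall h : Omega, (U (src h) *m x h <= U (tgt h))%MS.

Definition semistable (theta : I -> int) (beta : I -> nat) (x : rep beta) : Prop :=
  forall U : forall i : I, 'M[CC]_(beta i),
    is_subrep x U -> (exists i, U i != 0) ->
    slope theta (fun i => \rank (U i)) <= slope theta beta.

(* F : nat -> (I-graded subspaces of (+)_i C^{alpha_i}), F k i given by the row
   space of a square matrix, is a flag of type d^* = (d 0, ..., d (s-1)). *)
Definition is_flag (alpha : I -> nat) (s : nat) (d : nat -> I -> nat)
  (F : nat -> forall i : I, 'M[CC]_(alpha i)) : Prop :=
  [/\ forall i, F 0%N i = 0,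
      forall i, row_full (F s i),
      forall k i, (k < s)%N -> (F k i <= F k.+1 i)%MS
    & forall k i, (k < s)%N -> \rank (F k.+1 i) = (\rank (F k i) + d k i)%N].

(* Fixed bases: the rows of B k i project to a basis of F^{k+1}_i / F^k_i. *)
Definition is_quot_basis (alpha : I -> nat) (s : nat) (d : nat -> I -> nat)
  (F : nat -> forall i : I, 'M[CC]_(alpha i))
  (B : forall (k : nat) (i : I), 'M[CC]_(d k i, alpha i)) : Prop :=
  forall k i, (k < s)%N ->
    (B k i <= F k.+1 i)%MS /\ (F k.+1 i <= F k i + B k i)%MS.

Definition rep_flag (alpha : I -> nat) (s : nat)
  (F : nat -> forall i : I, 'M[CC]_(alpha i)) (x : rep alpha) : Prop :=
  forall k h, (k <= s)%N -> (F k (src h) *m x h <= F k (tgt h))%MS.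

(* y is the representation induced by x on F^{k+1}/F^k, in the bases B k. *)
Definition induced (alpha : I -> nat) (d : nat -> I -> nat)
  (F : nat -> forall i : I, 'M[CC]_(alpha i))
  (B : forall (k : nat) (i : I), 'M[CC]_(d k i, alpha i))
  (x : rep alpha) (k : nat) (y : rep (d k)) : Prop :=
  forall h, (B k (src h) *m x h - y h *m B k (tgt h) <= F k (tgt h))%MS.

Definition rep_flag_ss (theta : I -> int) (alpha : I -> nat) (s : nat)
  (d : nat -> I -> nat) (F : nat -> forall i : I, 'M[CC]_(alpha i))
  (B : forall (k : nat) (i : I), 'M[CC]_(d k i, alpha i)) (x : rep alpha) : Prop :=
  rep_flag s F x /\
  forall k, (k < s)%N ->
    exists y : rep (d k), induced F B x y /\ semistable theta y.

Definition coord (alpha : I -> nat) : finType :=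
  {h : Omega & ('I_(alpha (src h)) * 'I_(alpha (tgt h)))%type}.

Definition ncoord (alpha : I -> nat) : nat := #|coord alpha|.

Definition coords (alpha : I -> nat) (x : rep alpha) : 'I_(ncoord alpha) -> CC :=
  fun v => let c := @enum_val (coord alpha) (coord alpha) v
           in x (tag c) (tagged c).1 (tagged c).2.

Definition alg_indep (alpha : I -> nat) (S : rep alpha -> Prop)
  (J : {set 'I_(ncoord alpha)}) : Prop :=
  forall p : {mpoly CC[ncoord alpha]},
    (forall m, m \in msupp p -> forall v, v \notin J -> m v = 0%N) ->
    (forall x, S x -> p.@[coords x] = 0) ->
    p = 0.

(* dim S = n : the (Krull) dimension of the Zariski closure of S, i.e. the
   transcendence degree of its coordinate ring, i.e. the maximal number of
   algebraically independent coordinate functions on S. *)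
Definition is_dim (alpha : I -> nat) (S : rep alpha -> Prop) (n : nat) : Prop :=
  (exists J, alg_indep S J /\ #|J| = n) /\
  (forall J, alg_indep S J -> (#|J| <= n)%N).

End Quiver.

(* Let x0 be a point of Rep(Q,alpha)^ss_F and x any point of Rep(Q,alpha)_F.  The points
   x0 + t (x - x0) stay in Rep(Q,alpha)_F, and their subquotient representations move along
   segments starting at the semistable subquotients of x0.  For small real t > 0 these stay
   semistable: a destabilising subrepresentation has one of finitely many dimension vectors,
   and having a subrepresentation of a given dimension vector is a closed condition, because
   unitary frames of subspaces range over a compact set.  Hence a polynomial vanishing on
   Rep(Q,alpha)^ss_F vanishes on an interval of the complex line through x0 and x, hence on the
   whole line, in particular at x.  So both sets have the same algebraically independent
   families of coordinates. *)

From HB Require Import structures.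
From mathcomp Require Import all_boot all_order all_algebra.
From mathcomp Require Import complex Rstruct mpoly.
From mathcomp Require Import boolp classical_sets reals.
From mathcomp Require Import topology normedtype sequences Rstruct_topology.
From mathcomp Require Import ring spectral.

Set Implicit Arguments.
Unset Strict Implicit.
Unset Printing Implicit Defensive.

Import Order.TTheory GRing.Theory Num.Theory.
Import numFieldTopology.Exports numFieldNormedType.Exports.
Local Open Scope classical_set_scope.
Local Open Scope ring_scope.
Local Open Scope sesquilinear_scope.

Lemma lerpB (K : pzRingType) (V : lmodType K) (a b a' b' : V) (c : K) :
  a + c *: (a' - a) - (b + c *: (b' - b)) = a - b + c *: (a' - b' - (a - b)).
Proof.
rewrite opprD addrACA -scalerBr; congr (_ + _ *: _).
by rewrite !opprD !opprK addrACA.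
Qed.

Lemma lerp_submx (K : fieldType) m1 m2 n (A B : 'M[K]_(m1, n)) (C : 'M[K]_(m2, n)) c :
  (A <= C)%MS -> (B <= C)%MS -> ((A + c *: (B - A))%R <= C)%MS.
Proof.
move=> AC BC; apply: addmx_sub => //; apply/scalemx_sub/addmx_sub => //.
by rewrite eqmx_opp.
Qed.

Lemma meval_line_poly (K : comNzRingType) n (p : {mpoly K[n]}) (a b : 'I_n -> K) :
  exists q : {poly K}, forall c, q.[c] = p.@[fun v => a v + c * (b v - a v)].
Proof.
exists (\sum_(m <- msupp p) (p@_m)%:P *
          \prod_i ((a i)%:P + 'X * (b i - a i)%:P) ^+ (m i)).
move=> c; rewrite mevalE horner_sum; apply: eq_bigr => m _.
rewrite hornerM hornerC horner_prod; congr (_ * _); apply: eq_bigr => i _.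
by rewrite horner_exp hornerD hornerC hornerM hornerX hornerC.
Qed.

Lemma increasing_seq_ge (f : nat -> nat) : increasing_seq f -> forall n, (n <= f n)%N.
Proof.
move=> incr_f; elim=> // n IHn; apply: leq_ltn_trans IHn _.
by rewrite -[(f n < f n.+1)%N]/(f n < f n.+1)%O (leW_mono incr_f) ltEnat /=.
Qed.

Lemma cvgn_subseq (T : topologicalType) (u : nat -> T) (l : T) (f : nat -> nat) :
  increasing_seq f -> u @ \oo --> l -> (u \o f) @ \oo --> l.
Proof.
move=> incr_f; apply: cvg_comp => A [N _ AN]; exists N => // n /= Nn.
exact/AN/(leq_trans Nn (increasing_seq_ge incr_f n)).
Qed.

Lemma bolzano_weierstrass_seq (R : realType) (J : eqType) (r : seq J) (u : J -> nat -> R) :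
  (forall j n, `|u j n| <= 1) ->
  exists2 f : nat -> nat, increasing_seq f & forall j, j \in r -> cvgn (u j \o f).
Proof.
move=> u_le1; elim: r => [|j r [f incr_f cvg_f]]; first by exists id.
have [|g incr_g cvg_g] := @bolzano_weierstrass _ (u j \o f).
  exists 1; split; first by rewrite num_real.
  by move=> M M_gt1 n _; apply: le_trans (u_le1 j (f n)) (ltW M_gt1).
exists (f \o g) => [m n /=|k]; first by rewrite incr_f; exact: incr_g.
rewrite in_cons => /predU1P[-> //|kr].
have [l ul] := (cvg_ex _).1 (cvg_f k kr).
by apply/cvg_ex; exists l; exact: (cvgn_subseq incr_g ul).
Qed.

Section RightIntervals.
Variable R : realType.

Lemma right_interval_finI (T : finType) (P : T -> R -> Prop) :
  (forall a, exists2 e : R, 0 < e & forall t, 0 < t < e -> P a t) ->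
  exists2 e : R, 0 < e & forall t, 0 < t < e -> forall a, P a t.
Proof.
move=> P_near; have /boolp.choice[e e_ok] :
    forall a, exists e : R, 0 < e /\ forall t, 0 < t < e -> P a t.
  by move=> a; have [e] := P_near a; exists e.
exists (\big[Order.min/1]_a e a).
  by apply/bigmin_gtP; split => // a _; case: (e_ok a).
move=> t /andP[t_gt0 t_lt] a; apply: (e_ok a).2; rewrite t_gt0 /=.
by apply: lt_le_trans t_lt _; apply: bigmin_le.
Qed.

Lemma cvg0_seq_of_not_right_interval (P : R -> Prop) :
  ~ (exists2 e : R, 0 < e & forall t, 0 < t < e -> P t) ->
  exists2 u : nat -> R, u @ \oo --> 0 & forall n, ~ P (u n).
Proof.
move=> not_near.
have /boolp.choice[u u_ok] : forall n, exists t : R, 0 < t < harmonic n /\ ~ P t.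
  move=> n; apply: contrapT => no_t; apply: not_near; exists (harmonic n).
    exact: harmonic_gt0.
  by move=> t t_in; apply: contrapT => Pt; apply: no_t; exists t.
exists u => [|n]; last by case: (u_ok n).
apply: (@squeeze_cvgr _ _ _ _ (fun=> 0) (fun n => harmonic n)).
- by near=> n; case: (u_ok n) => /andP[/ltW -> /ltW ->].
- exact: cvg_cst.
- exact: cvg_harmonic.
Unshelve. all: by end_near.
Qed.

Lemma poly_eq0_right_interval (q : {poly complex R}) (e : R) : 0 < e ->
  (forall t, 0 < t < e -> q.[t%:C%C] = 0) -> q = 0.
Proof.
move=> e_gt0 q_vanish; apply/eqP; apply: contraT => q_neq0.
pose pts := [seq (e / j.+2%:R)%:C%C | j <- iota 0 (size q)].
have := max_poly_roots q_neq0 (rs := pts).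
rewrite size_map size_iota ltnn; apply.
- apply/allP => _ /mapP[j _ ->]; rewrite /root q_vanish //.
  by rewrite divr_gt0 ?ltr0Sn //= ltr_pdivrMr ?ltr0Sn // ltr_pMr // ltr1n.
- rewrite map_inj_uniq ?iota_uniq // => i j [] /(mulfI (lt0r_neq0 e_gt0)) /invr_inj.
  by move/eqP; rewrite eqr_nat => /eqP[].
Qed.

End RightIntervals.

Section ComplexLimits.
Variable R : realType.
Local Notation C := (complex R).
Local Notation Re := (@complex.Re R).
Local Notation Im := (@complex.Im R).

Lemma ReD (x y : C) : Re (x + y) = Re x + Re y. Proof. by case: x; case: y. Qed.
Lemma ImD (x y : C) : Im (x + y) = Im x + Im y. Proof. by case: x; case: y. Qed.
Lemma ReM (x y : C) : Re (x * y) = Re x * Re y - Im x * Im y. Proof. by case: x; case: y. Qed.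
Lemma ImM (x y : C) : Im (x * y) = Re x * Im y + Im x * Re y. Proof. by case: x; case: y. Qed.

Lemma conj_ReIm (x : C) : x^* = (Re x +i* - Im x)%C.
Proof.
rewrite {1}[x]Crect rmorphD rmorphM /= conjCi !conj_Creal ?Creal_Re ?Creal_Im //.
rewrite -complexRe -complexIm -complexiE.
by case: x => a b /=; simpc.
Qed.

Lemma Re_sum (J : Type) (r : seq J) (F : J -> C) :
  Re (\sum_(j <- r) F j) = \sum_(j <- r) Re (F j).
Proof. by elim: r => [|j r IHr]; rewrite ?big_nil // !big_cons ReD IHr. Qed.

Lemma Re_mul_conj (x : C) : Re (x * x^*) = Re x ^+ 2 + Im x ^+ 2.
Proof. by rewrite conj_ReIm; case: x => a b /=; ring. Qed.

Definition cvgC (u : nat -> C) (c : C) : Prop :=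
  (fun n => Re (u n)) @ \oo --> Re c /\ (fun n => Im (u n)) @ \oo --> Im c.

Lemma cvgC_cst (c : C) : cvgC (fun=> c) c.
Proof. by split; apply: cvg_cst. Qed.

Lemma cvgC_real (t : nat -> R) : t @ \oo --> 0 -> cvgC (fun n => (t n)%:C%C) 0.
Proof. by split => //=; apply: cvg_cst. Qed.

Lemma cvgCD u v a b : cvgC u a -> cvgC v b -> cvgC (fun n => u n + v n) (a + b).
Proof.
move=> [ua1 ua2] [vb1 vb2]; rewrite /cvgC ReD ImD.
rewrite (eq_cvg _ _ (fun n => ReD _ _)) (eq_cvg _ _ (fun n => ImD _ _)).
by split; apply: cvgD.
Qed.

Lemma cvgCM u v a b : cvgC u a -> cvgC v b -> cvgC (fun n => u n * v n) (a * b).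
Proof.
move=> [ua1 ua2] [vb1 vb2]; rewrite /cvgC ReM ImM.
rewrite (eq_cvg _ _ (fun n => ReM _ _)) (eq_cvg _ _ (fun n => ImM _ _)).
by split; [apply: cvgB | apply: cvgD]; apply: cvgM.
Qed.

Lemma cvgC_conj u a : cvgC u a -> cvgC (fun n => (u n)^*) a^*.
Proof.
move=> [ua1 ua2]; rewrite /cvgC conj_ReIm.
rewrite (eq_cvg _ _ (fun n => congr1 Re (conj_ReIm (u n)))).
rewrite (eq_cvg _ _ (fun n => congr1 Im (conj_ReIm (u n)))) /=.
by split => //; apply: cvgN.
Qed.

Lemma cvgC_sum (J : Type) (r : seq J) (u : nat -> J -> C) (a : J -> C) :
  (forall j, cvgC (u^~ j) (a j)) ->
  cvgC (fun n => \sum_(j <- r) u n j) (\sum_(j <- r) a j).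
Proof.
move=> ua; elim: r => [|j r IHr].
  by rewrite big_nil; under [fun n => _]funext do rewrite big_nil; apply: cvgC_cst.
rewrite big_cons; under [fun n => _]funext do rewrite big_cons.
exact: cvgCD.
Qed.

Lemma cvgC_unique u a b : cvgC u a -> cvgC u b -> a = b.
Proof.
move=> [ua1 ua2] [ub1 ub2]; apply/eqP; rewrite eq_complex.
rewrite -(cvg_lim _ ua1) // -(cvg_lim _ ua2) //.
by rewrite (cvg_lim _ ub1) // (cvg_lim _ ub2) // !eqxx.
Qed.

Lemma bounded_cvgC_subseq (T : finType) (u : nat -> T -> C) :
  (forall n a, `|Re (u n a)| <= 1 /\ `|Im (u n a)| <= 1) ->
  exists2 f : nat -> nat, increasing_seq f &
    exists c : T -> C, forall a, cvgC (fun n => u (f n) a) (c a).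
Proof.
move=> u_le1.
pose v (ab : T * bool) n := if ab.2 then Re (u n ab.1) else Im (u n ab.1).
have v_le1 j n : `|v j n| <= 1 by case: j => a [] /=; case: (u_le1 n a).
have [f incr_f cvg_f] := bolzano_weierstrass_seq (enum [set: T * bool]) v_le1.
exists f => //; exists (fun a => (limn (v (a, true) \o f) +i* limn (v (a, false) \o f))%C).
by move=> a; split; apply: cvg_f; rewrite mem_enum inE.
Qed.

End ComplexLimits.

Section MatrixLimits.
Variable R : realType.
Local Notation C := (complex R).
Local Notation Re := (@complex.Re R).
Local Notation Im := (@complex.Im R).

Definition mxcvg m n (A : nat -> 'M[C]_(m, n)) (L : 'M[C]_(m, n)) : Prop :=
  forall i j, cvgC (fun k => A k i j) (L i j).

Lemma mxcvg_cst m n (L : 'M[C]_(m, n)) : mxcvg (fun=> L) L.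
Proof. by move=> i j; apply: cvgC_cst. Qed.

Lemma mxcvgD m n (A B : nat -> 'M[C]_(m, n)) LA LB :
  mxcvg A LA -> mxcvg B LB -> mxcvg (fun k => A k + B k) (LA + LB).
Proof.
move=> AL BL i j; rewrite mxE; under [fun k => _]funext do rewrite mxE.
exact: cvgCD.
Qed.

Lemma mxcvgZ m n (a : nat -> C) c (A : nat -> 'M[C]_(m, n)) L :
  cvgC a c -> mxcvg A L -> mxcvg (fun k => a k *: A k) (c *: L).
Proof.
move=> ac AL i j; rewrite mxE; under [fun k => _]funext do rewrite mxE.
exact: cvgCM.
Qed.

Lemma mxcvgM m n p (A : nat -> 'M[C]_(m, n)) (B : nat -> 'M[C]_(n, p)) LA LB :
  mxcvg A LA -> mxcvg B LB -> mxcvg (fun k => A k *m B k) (LA *m LB).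
Proof.
move=> AL BL i j; rewrite mxE; under [fun k => _]funext do rewrite mxE.
by apply: cvgC_sum => l; apply: cvgCM.
Qed.

Lemma mxcvg_adj m n (A : nat -> 'M[C]_(m, n)) L :
  mxcvg A L -> mxcvg (fun k => (A k)^t*) (L^t*).
Proof.
move=> AL i j; rewrite !mxE; under [fun k => _]funext do rewrite !mxE.
exact: cvgC_conj.
Qed.

Lemma mxcvg_subseq m n (A : nat -> 'M[C]_(m, n)) L (f : nat -> nat) :
  increasing_seq f -> mxcvg A L -> mxcvg (A \o f) L.
Proof.
move=> incr_f AL i j; case: (AL i j) => ARe AIm.
by split; [exact: (cvgn_subseq incr_f ARe) | exact: (cvgn_subseq incr_f AIm)].
Qed.

Lemma mxcvg_unique m n (A : nat -> 'M[C]_(m, n)) L1 L2 :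
  mxcvg A L1 -> mxcvg A L2 -> L1 = L2.
Proof. by move=> AL1 AL2; apply/matrixP => i j; apply: cvgC_unique (AL1 i j) (AL2 i j). Qed.

Lemma unitarymx_ReIm_le1 m n (M : 'M[C]_(m, n)) : M \is unitarymx ->
  forall i j, `|Re (M i j)| <= 1 /\ `|Im (M i j)| <= 1.
Proof.
move=> /unitarymxP MMt1 i j.
have row_norm1 : \sum_l (Re (M i l) ^+ 2 + Im (M i l) ^+ 2) = 1.
  have := congr1 (fun X : 'M[C]_m => Re (X i i)) MMt1.
  rewrite !mxE eqxx /= Re_sum => <-.
  by apply: eq_bigr => l _; rewrite !mxE Re_mul_conj.
have entry_le1 : Re (M i j) ^+ 2 + Im (M i j) ^+ 2 <= 1.
  rewrite -row_norm1 (bigD1 j) //= lerDl.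
  by apply: sumr_ge0 => l _; apply: addr_ge0; apply: sqr_ge0.
have [Re2_le1 Im2_le1] : `|Re (M i j)| ^+ 2 <= 1 /\ `|Im (M i j)| ^+ 2 <= 1.
  rewrite !real_normK ?num_real //.
  by split; apply: le_trans entry_le1; rewrite ?lerDl ?lerDr sqr_ge0.
by move: Re2_le1 Im2_le1; rewrite !expr_le1.
Qed.

Lemma unitarymx_closed m n (A : nat -> 'M[C]_(m, n)) L :
  (forall k, A k \is unitarymx) -> mxcvg A L -> L \is unitarymx.
Proof.
move=> A_unitary AL; apply/unitarymxP.
apply: (@mxcvg_unique _ _ (fun k => A k *m (A k)^t*)).
  exact/mxcvgM/mxcvg_adj.
by under [fun k => _]funext do rewrite (unitarymxP (A_unitary _)); apply: mxcvg_cst.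
Qed.

Lemma unitarymx_family_cvg_subseq (I : finType) (p q : I -> nat)
    (M : nat -> forall i, 'M[C]_(p i, q i)) :
  (forall k i, M k i \is unitarymx) ->
  exists2 f : nat -> nat, increasing_seq f &
    exists2 L : forall i, 'M[C]_(p i, q i),
      forall i, L i \is unitarymx & forall i, mxcvg (fun k => M (f k) i) (L i).
Proof.
move=> M_unitary.
pose T := {i : I & ('I_(p i) * 'I_(q i))%type}.
pose u k (a : T) := M k (tag a) (tagged a).1 (tagged a).2.
have [f incr_f [c uc]] := @bounded_cvgC_subseq _ _ u
  (fun k a => unitarymx_ReIm_le1 (M_unitary k (tag a)) _ _).
pose L i : 'M_(p i, q i) := \matrix_(a, b) c (existT _ i (a, b)).
have ML i : mxcvg (fun k => M (f k) i) (L i).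
  by move=> a b; rewrite mxE; apply: (uc (existT _ i (a, b))).
exists f => //; exists L => // i.
exact: unitarymx_closed (fun k => M_unitary (f k) i) (ML i).
Qed.

Lemma unitary_row_basis n r (U : 'M[C]_n) : \rank U = r ->
  exists2 M : 'M[C]_(r, n), M \is unitarymx & (M :=: U)%MS.
Proof.
move=> <-; exists (schmidt (row_base U)); first by apply: schmidt_unitarymx; rewrite rank_leq_col.
exact: eqmx_trans (eqmx_schmidt_free (row_base_free U)) (eq_row_base U).
Qed.

Lemma submx_unitaryE m n p (A : 'M[C]_(m, n)) (M : 'M[C]_(p, n)) :
  M \is unitarymx -> (A <= M)%MS = (A *m M^t* *m M == A).
Proof.
move=> /unitarymxP MMt1; apply/idP/eqP => [/submxP[W ->]|<-]; last exact: submxMl.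
by rewrite -!mulmxA [M *m (_ *m _)]mulmxA MMt1 mul1mx.
Qed.

End MatrixLimits.

Section Representations.
Variables (I Omega : finType) (src tgt : Omega -> I).
Local Notation R := Rdefinitions.R.
Local Notation rep := (rep src tgt).

Definition rep_line beta (y z : rep beta) (c : CC) : rep beta :=
  fun h => y h + c *: (z h - y h).

Definition has_subrep_dim beta (gam : I -> nat) (y : rep beta) : Prop :=
  exists2 U : forall i, 'M[CC]_(beta i), is_subrep y U & forall i, \rank (U i) = gam i.

Lemma semistableP theta beta (y : rep beta) :
  semistable theta y <->
  forall gam, has_subrep_dim gam y -> (exists i, gam i != 0%N) ->
    slope theta gam <= slope theta beta.
Proof.
split=> [y_ss gam [U U_sub U_rank] [i gam_i_neq0]|y_ss U U_sub [i Ui_neq0]].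
  have -> : gam = (fun i => \rank (U i)) by apply: funext => j; rewrite U_rank.
  by apply: y_ss U_sub _; exists i; rewrite -mxrank_eq0 U_rank.
by apply: y_ss; [exists U | exists i; rewrite mxrank_eq0].
Qed.

Lemma has_subrep_dimP beta gam (y : rep beta) :
  has_subrep_dim gam y <->
  exists M : forall i, 'M[CC]_(gam i, beta i),
    (forall i, M i \is unitarymx) /\ forall h, (M (src h) *m y h <= M (tgt h))%MS.
Proof.
split=> [[U U_sub U_rank]|[M [M_unitary M_sub]]].
  have M_ok i : {M : 'M[CC]_(gam i, beta i) | M \is unitarymx /\ (M :=: U i)%MS}.
    by apply: cid; have [M] := unitary_row_basis (U_rank i); exists M.
  exists (fun i => sval (M_ok i)); split=> [i|h]; first by case: (M_ok i) => ? [].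
  case: (M_ok (src h)) (M_ok (tgt h)) => /= Ms [_ Ms_U] [/= Mt [_ Mt_U]].
  by rewrite (eqmxMr _ Ms_U) Mt_U; apply: U_sub.
exists (fun i => <<M i>>%MS) => [h|i]; last by rewrite genmxE mxrank_unitary.
by rewrite (eqmxMr _ (genmxE _)) genmxE; apply: M_sub.
Qed.

Lemma has_subrep_dim_closed beta gam (y : nat -> rep beta) (y0 : rep beta) :
  (forall h, mxcvg (fun k => y k h) (y0 h)) ->
  (forall k, has_subrep_dim gam (y k)) -> has_subrep_dim gam y0.
Proof.
move=> y_cvg /(fun sub k => (has_subrep_dimP _ _).1 (sub k)) /boolp.choice[M M_ok].
have [f incr_f [L L_unitary ML]] :=
  unitarymx_family_cvg_subseq (fun k i => (M_ok k).1 i).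
apply/has_subrep_dimP; exists L; split=> // h.
(* For unitary frames, inclusion of row spaces is an equation, which passes to the limit. *)
rewrite submx_unitaryE //; apply/eqP.
pose N k := M (f k); pose yf k := y (f k) h.
have yf_cvg : mxcvg yf (y0 h) by apply: mxcvg_subseq incr_f (y_cvg h).
pose proj k := N k (src h) *m yf k *m (N k (tgt h))^t* *m N k (tgt h).
apply: (@mxcvg_unique _ _ _ proj).
  by apply/mxcvgM/ML/mxcvgM/mxcvg_adj/ML/mxcvgM/yf_cvg/ML.
have proj_k k : proj k = N k (src h) *m yf k.
  by apply/eqP; rewrite -submx_unitaryE; [apply: (M_ok (f k)).2 | apply: (M_ok (f k)).1].
by rewrite (funext proj_k); apply/mxcvgM/yf_cvg/ML.
Qed.

Lemma rep_line_cvg0 beta (y z : rep beta) (t : nat -> R) : t @ \oo --> (0 : R) ->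
  forall h, mxcvg (fun k => rep_line y z (t k)%:C%C h) (y h).
Proof.
move=> t_cvg0 h.
have := mxcvgD (mxcvg_cst (y h)) (mxcvgZ (cvgC_real t_cvg0) (mxcvg_cst (z h - y h))).
by rewrite scale0r addr0.
Qed.

Lemma not_has_subrep_dim_line beta gam (y z : rep beta) : ~ has_subrep_dim gam y ->
  exists2 e : R, 0 < e &
    forall t, 0 < t < e -> ~ has_subrep_dim gam (rep_line y z t%:C%C).
Proof.
move=> no_sub; apply: contrapT => /cvg0_seq_of_not_right_interval[t t_cvg0 t_sub].
apply/no_sub/(has_subrep_dim_closed (rep_line_cvg0 y z t_cvg0)) => k.
exact: contrapT (t_sub k).
Qed.

Lemma semistable_line theta beta (y z : rep beta) : semistable theta y ->
  exists2 e : R, 0 < e & forall t, 0 < t < e -> semistable theta (rep_line y z t%:C%C).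
Proof.
move=> /semistableP y_ss.
pose gamma (g : {ffun I -> 'I_(\sum_i beta i).+1}) i := nat_of_ord (g i).
have [e e_gt0 e_ok] : exists2 e : R, 0 < e & forall t, 0 < t < e -> forall g,
    has_subrep_dim (gamma g) (rep_line y z t%:C%C) -> (exists i, gamma g i != 0%N) ->
    slope theta (gamma g) <= slope theta beta.
  apply: right_interval_finI => g.
  have [le_slope|lt_slope] := leP (slope theta (gamma g)) (slope theta beta).
    by exists 1 => // t _ _ _.
  have [nz|z0] := pselect (exists i, gamma g i != 0%N); last by exists 1 => // t _ _ /z0.
  have [|e e_gt0 no_sub] := @not_has_subrep_dim_line _ (gamma g) y z.
    by move=> /y_ss /(_ nz); rewrite leNgt lt_slope.
  by exists e => // t /no_sub.
exists e => // t t_in; apply/semistableP => gam gam_sub gam_nz.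
have gam_le i : (gam i <= \sum_j beta j)%N.
  case: gam_sub => U _ <-.
  by apply: leq_trans (rank_leq_row _) _; rewrite (bigD1 i) //= leq_addr.
pose g : {ffun I -> 'I_(\sum_i beta i).+1} := [ffun i => inord (gam i)].
have gam_g : gam = gamma g by apply: funext => i; rewrite /gamma ffunE inordK // ltnS.
by move: gam_sub gam_nz; rewrite gam_g; apply: e_ok t_in g.
Qed.

End Representations.

Section FlagRepresentations.
Variables (I Omega : finType) (src tgt : Omega -> I).
Variables (theta : I -> int) (alpha : I -> nat) (s : nat) (d : nat -> I -> nat).
Variables (F : nat -> forall i, 'M[CC]_(alpha i)) (B : forall k i, 'M[CC]_(d k i, alpha i)).
Local Notation R := Rdefinitions.R.
Local Notation rep := (rep src tgt).

Lemma rep_flag_line (x0 x : rep alpha) c :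
  rep_flag s F x0 -> rep_flag s F x -> rep_flag s F (rep_line x0 x c).
Proof.
move=> x0F xF k h ks; rewrite mulmxDr -scalemxAr mulmxBr.
exact: lerp_submx (x0F k h ks) (xF k h ks).
Qed.

Lemma induced_exists (x : rep alpha) k :
  is_quot_basis s F B -> rep_flag s F x -> (k < s)%N ->
  exists y : rep (d k), induced F B x y.
Proof.
move=> B_basis xF ks.
have y_ok h : {Y : 'M[CC]_(d k (src h), d k (tgt h)) |
    (B k (src h) *m x h - Y *m B k (tgt h) <= F k (tgt h))%MS}.
  apply: cid; have : (B k (src h) *m x h <= F k (tgt h) + B k (tgt h))%MS.
    apply: submx_trans (B_basis k _ ks).2.
    exact: submx_trans (submxMr _ (B_basis k _ ks).1) (xF k.+1 h ks).
  case/sub_addsmxP => [[u v]] /= ->; exists v.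
  by rewrite addrK submxMl.
by exists (fun h => sval (y_ok h)) => h; exact: (svalP (y_ok h)).
Qed.

Lemma induced_line (x0 x : rep alpha) k (y0 y : rep (d k)) c :
  induced F B x0 y0 -> induced F B x y ->
  induced F B (rep_line x0 x c) (rep_line y0 y c).
Proof.
move=> x0y0 xy h; rewrite mulmxDr mulmxDl -scalemxAr -scalemxAl mulmxBr mulmxBl.
by rewrite lerpB; apply: lerp_submx (x0y0 h) (xy h).
Qed.

Lemma rep_flag_ss_line (x0 x : rep alpha) :
  is_quot_basis s F B -> rep_flag_ss theta s F B x0 -> rep_flag s F x ->
  exists2 e : R, 0 < e &
    forall t, 0 < t < e -> rep_flag_ss theta s F B (rep_line x0 x t%:C%C).
Proof.
move=> B_basis [x0F x0_ss] xF.
have [e e_gt0 e_ok] : exists2 e : R, 0 < e & forall t, 0 < t < e -> forall k : 'I_s,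
    exists y : rep (d k), induced F B (rep_line x0 x t%:C%C) y /\ semistable theta y.
  apply: right_interval_finI => k.
  have [y0 [x0y0 y0_ss]] := x0_ss k (ltn_ord k).
  have [y xy] := induced_exists B_basis xF (ltn_ord k).
  have [e e_gt0 ss_line] := semistable_line y y0_ss.
  exists e => // t t_in; exists (rep_line y0 y t%:C%C).
  by split; [apply: induced_line | apply: ss_line].
exists e => // t t_in; split; first exact: rep_flag_line.
by move=> k ks; apply: (e_ok t t_in (Ordinal ks)).
Qed.

Lemma coords_rep_line (y z : rep alpha) c :
  coords (rep_line y z c) = fun v => coords y v + c * (coords z v - coords y v).
Proof. by apply: funext => v; rewrite /coords /rep_line !mxE. Qed.

Lemma rep_flag_ss_vanishing (x0 : rep alpha) (p : {mpoly CC[ncoord src tgt alpha]}) :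
  is_quot_basis s F B -> rep_flag_ss theta s F B x0 ->
  (forall x, rep_flag_ss theta s F B x -> p.@[coords x] = 0) ->
  forall x, rep_flag s F x -> p.@[coords x] = 0.
Proof.
move=> B_basis x0_ss p_vanish x xF.
have [e e_gt0 line_ss] := rep_flag_ss_line B_basis x0_ss xF.
have [q q_line] := meval_line_poly p (coords x0) (coords x).
have q0 : q = 0.
  apply: (poly_eq0_right_interval e_gt0) => t t_in.
  by rewrite q_line -coords_rep_line; apply/p_vanish/line_ss.
have := q_line 1; rewrite q0 horner0 => ->; congr meval.
by apply: funext => v; rewrite mul1r addrC subrK.
Qed.

End FlagRepresentations.

Lemma is_dim_of_vanishing (I Omega : finType) (src tgt : Omega -> I) (alpha : I -> nat)
    (S T : rep src tgt alpha -> Prop) :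
  (forall x, S x -> T x) ->
  (forall p, (forall x, S x -> p.@[coords x] = 0) -> forall x, T x -> p.@[coords x] = 0) ->
  forall n, is_dim T n <-> is_dim S n.
Proof.
move=> ST S_dense n; rewrite /is_dim.
suff -> : alg_indep T = alg_indep S by [].
apply/funext => J; apply/propext; split=> J_indep p p_supp p_vanish.
  by apply: (J_indep p p_supp); apply: S_dense.
by apply: (J_indep p p_supp) => x /ST; apply: p_vanish.
Qed.

Theorem lemma4p5
  (I Omega : finType) (src tgt : Omega -> I)
  (theta : I -> int) (alpha : I -> nat)
  (s : nat) (d : nat -> I -> nat)
  (hd_nz : forall k, (k < s)%N -> exists i, d k i != 0%N)
  (hd_sum : forall i, (\sum_(k < s) d k i)%N = alpha i)
  (F : nat -> forall i : I, 'M[CC]_(alpha i))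
  (hF : @is_flag I alpha s d F)
  (B : forall (k : nat) (i : I), 'M[CC]_(d k i, alpha i))
  (hB : @is_quot_basis I alpha s d F B)
  (hne : exists x : rep src tgt alpha,
           @rep_flag_ss I Omega src tgt theta alpha s d F B x) :
  forall n : nat,
    @is_dim I Omega src tgt alpha (@rep_flag I Omega src tgt alpha s F) n <->
    @is_dim I Omega src tgt alpha (@rep_flag_ss I Omega src tgt theta alpha s d F B) n.
Proof.
have [x0 x0_ss] := hne.
apply: is_dim_of_vanishing => [x [] //|p p_vanish].
exact: rep_flag_ss_vanishing hB x0_ss p_vanish.
Qed.
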